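(* Consider the linear time-invariant multiple-input multiple-output (LTI MIMO) state-space model $$\alpha_{k+1}=T\alpha_k+Bx_k+\eta_k,\qquad y_k=Z\alpha_k+\beta x_k+\varepsilon_k,\qquad \begin{bmatrix}\eta_k\\ \varepsilon_k\end{bmatrix}\sim\mathcal N\!\left(\begin{bmatrix}0\\0\end{bmatrix},\begin{bmatrix}Q&S\\ S^\top&H\end{bmatrix}\right),$$ with $\alpha_k\in\mathbb R^n$, $y_k\in\mathbb R^m$, $x_k\in\mathbb R^d$, $H>0$, initial state $\alpha_0\sim\mathcal N(\bar\alpha_0,\Pi_0)$ with $\Pi_0>0$, and $\overline Q:=Q-SH^{-1}S^\top\ge 0$. Let $\overline T:=T-SH^{-1}Z$, $\overline B:=B-SH^{-1}\beta$. (Conventional filter, Algorithm 1.) Set $\hat\alpha_{0|0}=\bar\alpha_0$, $P_{0|0}=\Pi_0$, and for $k=1,\dots,N$: $\hat\alpha_{k|k-1}=\overline T\hat\alpha_{k-1|k-1}+\overline Bx_{k-1}+SH^{-1}y_{k-1}$; $P_{k|k-1}=\overline TP_{k-1|k-1}\overline T^\top+\overline Q$; $R_{e,k}=ZP_{k|k-1}Z^\top+H$; $K_k=P_{k|k-1}Z^\top R_{e,k}^{-1}$; $e_k=y_k-Z\hat\alpha_{k|k-1}-\beta x_k$; $\hat\alpha_{k|k}=\hat\alpha_{k|k-1}+K_ke_k$; $P_{k|k}=(I-K_kZ)P_{k|k-1}$. (UD-based filter, Algorithm 1a.) Take $UDU^\top$ factorizations $\Pi_0=\bar U_{\Pi_0}D_{\Pi_0}\bar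 U_{\Pi_0}^\top$, $H=\bar U_HD_H\bar U_H^\top$, $\overline Q=\bar U_{\overline Q}D_{\overline Q}\bar U_{\overline Q}^\top$; set $\hat\alpha_{0|0}=\bar\alpha_0$, $\bar U_{P_{0|0}}=\bar U_{\Pi_0}$, $D_{P_{0|0}}=D_{\Pi_0}$; and for $k=1,\dots,N$: (i) $\hat\alpha_{k|k-1}=\overline T\hat\alpha_{k-1|k-1}+\overline Bx_{k-1}+SH^{-1}y_{k-1}$; (ii) apply MWGS to the pre-arrays $\mathbb A^\top=[\,\overline T\bar U_{P_{k-1|k-1}}\ \ \bar U_{\overline Q}\,]$, $\mathbb D_A=D_{P_{k-1|k-1}}\oplus D_{\overline Q}$ and set $\bar U_{P_{k|k-1}}:=\mathbb R$, $D_{P_{k|k-1}}:=\mathbb D_R$; (iii) apply MWGS to the pre-arrays $\mathbb A^\top=\begin{bmatrix}\bar U_{P_{k|k-1}}&0\\ Z\bar U_{P_{k|k-1}}&\bar U_H\end{bmatrix}$, $\mathbb D_A=D_{P_{k|k-1}}\oplus D_H$, and read off from the post-arrays $\mathbb R=\begin{bmatrix}\bar U_{P_{k|k}}&\bar K_k^u\\0&\bar U_{R_{e,k}}\end{bmatrix}$, $\mathbb D_R=D_{P_{k|k}}\oplus D_{R_{e,k}}$ (blocks partitioned conformally with sizes $n$ and $m$); (iv) $e_k=y_k-Z\hat\alpha_{k|k-1}-\beta x_k$; (v) $\hat\alpha_{k|k}=\hat\alpha_{k|k-1}+\bar K_k^u\bar U_{R_{e,k}}^{-1}e_k$. Then Algorithm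 1a is algebraically equivalent to Algorithm 1: for every $k$, the quantities computed by Algorithm 1a satisfy $\bar U_{P_{k|k-1}}D_{P_{k|k-1}}\bar U_{P_{k|k-1}}^\top=P_{k|k-1}$, $\bar U_{R_{e,k}}D_{R_{e,k}}\bar U_{R_{e,k}}^\top=R_{e,k}$, $\bar K_k^u\bar U_{R_{e,k}}^{-1}=K_k$, $\bar U_{P_{k|k}}D_{P_{k|k}}\bar U_{P_{k|k}}^\top=P_{k|k}$, and the state estimates $\hat\alpha_{k|k-1}$, $\hat\alpha_{k|k}$ coincide with those of Algorithm 1.
   Context: A $UDU^\top$ (modified Cholesky) factorization of a symmetric positive (semi)definite matrix $P$ is $P=\bar U_PD_P\bar U_P^\top$ with $\bar U_P$ upper triangular with unit diagonal and $D_P$ diagonal. For square matrices $A,B$, $A\oplus B:=\mathrm{diag}\{A,B\}$. The modified weighted Gram–Schmidt (MWGS) step: given pre-arrays $\mathbb A\in\mathbb R^{r\times s}$ ($r\ge s$) and a diagonal $\mathbb D_A\in\mathbb R^{r\times r}$, $\mathbb D_A>0$, it returns post-arrays $\mathbb R\in\mathbb R^{s\times s}$ upper triangular with unit diagonal and $\mathbb D_R\in\mathbb R^{s\times s}$ diagonal such that $\mathbb A^\top=\mathbb R\,\mathfrak W^\top$ and $\mathfrak W^\top\mathbb D_A\mathfrak W=\mathbb D_R$ for some matrix $\mathfrak W\in\mathbb R^{r\times s}$. The algorithms are considered under the assumption that every MWGS call is well defined. *)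

From HB Require Import structures.
From mathcomp Require Import all_boot all_order all_algebra.
Set Implicit Arguments. Unset Strict Implicit. Unset Printing Implicit Defensive.
Import Order.TTheory GRing.Theory Num.Theory.
Local Open Scope ring_scope.

Section Defs.
Variable R : realFieldType.

Definition posdef (k : nat) (M : 'M[R]_k) : Prop :=
  M^T = M /\ forall v : 'cV[R]_k, v != 0 -> 0 < (v^T *m M *m v) ord0 ord0.

Definition possemidef (k : nat) (M : 'M[R]_k) : Prop :=
  M^T = M /\ forall v : 'cV[R]_k, 0 <= (v^T *m M *m v) ord0 ord0.

Definition is_diag (k : nat) (M : 'M[R]_k) : Prop :=
  forall i j : 'I_k, i != j -> M i j = 0.

Definition unit_upper (k : nat) (U : 'M[R]_k) : Prop :=
  (forall i j : 'I_k, (j < i)%N -> U i j = 0) /\ (forall i : 'I_k, U i i = 1).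

Definition UDU_fact (k : nat) (P U D : 'M[R]_k) : Prop :=
  unit_upper U /\ is_diag D /\ P = U *m D *m U^T.

Definition MWGS (r s : nat) (A : 'M[R]_(r, s)) (DA : 'M[R]_r)
    (Rm DR : 'M[R]_s) : Prop :=
  is_diag DA /\ (forall i : 'I_r, 0 < DA i i) /\
  unit_upper Rm /\ is_diag DR /\
  exists W : 'M[R]_(r, s), A^T = Rm *m W^T /\ W^T *m DA *m W = DR.

Definition dsum (p q : nat) (A : 'M[R]_p) (B : 'M[R]_q) : 'M[R]_(p + q) :=
  block_mx A 0 0 B.

Variables (n m d : nat).

Definition Tbar (T : 'M[R]_n) (S : 'M[R]_(n, m)) (H : 'M[R]_m)
  (Z : 'M[R]_(m, n)) : 'M[R]_n := T - S *m invmx H *m Z.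
Definition Bbar (B : 'M[R]_(n, d)) (S : 'M[R]_(n, m)) (H : 'M[R]_m)
  (beta : 'M[R]_(m, d)) : 'M[R]_(n, d) := B - S *m invmx H *m beta.
Definition Qbar (Q : 'M[R]_n) (S : 'M[R]_(n, m)) (H : 'M[R]_m) : 'M[R]_n :=
  Q - S *m invmx H *m S^T.

Section Filters.
Variables (T : 'M[R]_n) (B : 'M[R]_(n, d)) (Z : 'M[R]_(m, n))
  (beta : 'M[R]_(m, d)) (Q : 'M[R]_n) (S : 'M[R]_(n, m)) (H : 'M[R]_m)
  (x : nat -> 'cV[R]_d) (y : nat -> 'cV[R]_m).

(* time update of the estimate, from filtered estimate a at time j to j+1 *)
Definition pred_est (a : 'cV[R]_n) (j : nat) : 'cV[R]_n :=
  Tbar T S H Z *m a + Bbar B S H beta *m x j + S *m invmx H *m y j.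

Definition pred_cov (P : 'M[R]_n) : 'M[R]_n :=
  Tbar T S H Z *m P *m (Tbar T S H Z)^T + Qbar Q S H.

Definition innov_cov (Pp : 'M[R]_n) : 'M[R]_m := Z *m Pp *m Z^T + H.

Definition gain (Pp : 'M[R]_n) : 'M[R]_(n, m) := Pp *m Z^T *m invmx (innov_cov Pp).

Definition innov (ap : 'cV[R]_n) (k : nat) : 'cV[R]_m :=
  y k - Z *m ap - beta *m x k.

Fixpoint kf (a0 : 'cV[R]_n) (Pi0 : 'M[R]_n) (k : nat) : 'cV[R]_n * 'M[R]_n :=
  match k with
  | 0 => (a0, Pi0)
  | j.+1 =>
      let ap := pred_est (kf a0 Pi0 j).1 j in
      let Pp := pred_cov (kf a0 Pi0 j).2 in
      (ap + gain Pp *m innov ap j.+1, (1%:M - gain Pp *m Z) *m Pp)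
  end.

Definition kf_filt_est a0 Pi0 k : 'cV[R]_n := (kf a0 Pi0 k).1.
Definition kf_filt_cov a0 Pi0 k : 'M[R]_n := (kf a0 Pi0 k).2.
(* for k >= 1 : alpha_{k|k-1}, P_{k|k-1}, R_{e,k}, K_k *)
Definition kf_pred_est a0 Pi0 k : 'cV[R]_n := pred_est (kf_filt_est a0 Pi0 k.-1) k.-1.
Definition kf_pred_cov a0 Pi0 k : 'M[R]_n := pred_cov (kf_filt_cov a0 Pi0 k.-1).
Definition kf_Re a0 Pi0 k : 'M[R]_m := innov_cov (kf_pred_cov a0 Pi0 k).
Definition kf_K a0 Pi0 k : 'M[R]_(n, m) := gain (kf_pred_cov a0 Pi0 k).

(* ---------- Algorithm 1a (UD-based filter) ----------
   The MWGS outputs of step (iii) at time k are R3 k, DR3 k : 'M_(n+m);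
   blocks read off conformally with sizes n and m. *)
Variables (R3 DR3 : nat -> 'M[R]_(n + m)).

Definition ud_Ufilt (UPi0 : 'M[R]_n) (k : nat) : 'M[R]_n :=
  if k is 0 then UPi0 else ulsubmx (R3 k).
Definition ud_Dfilt (DPi0 : 'M[R]_n) (k : nat) : 'M[R]_n :=
  if k is 0 then DPi0 else ulsubmx (DR3 k).
Definition ud_Kbar (k : nat) : 'M[R]_(n, m) := ursubmx (R3 k).
Definition ud_URe (k : nat) : 'M[R]_m := drsubmx (R3 k).
Definition ud_DRe (k : nat) : 'M[R]_m := drsubmx (DR3 k).

Fixpoint ud_filt_est (a0 : 'cV[R]_n) (k : nat) : 'cV[R]_n :=
  match k with
  | 0 => a0
  | j.+1 =>
      let ap := pred_est (ud_filt_est a0 j) j in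
      ap + ud_Kbar j.+1 *m invmx (ud_URe j.+1) *m innov ap j.+1
  end.

(* predicted estimate alpha_{k|k-1} of Algorithm 1a, k >= 1 *)
Definition ud_pred_est (a0 : 'cV[R]_n) (k : nat) : 'cV[R]_n :=
  pred_est (ud_filt_est a0 k.-1) k.-1.

Definition preA2 (UPi0 UQb : 'M[R]_n) (k : nat) : 'M[R]_(n + n, n) :=
  (row_mx (Tbar T S H Z *m ud_Ufilt UPi0 k.-1) UQb)^T.
Definition preD2 (DPi0 DQb : 'M[R]_n) (k : nat) : 'M[R]_(n + n) :=
  dsum (ud_Dfilt DPi0 k.-1) DQb.

Definition preA3 (Up : 'M[R]_n) (UH : 'M[R]_m) : 'M[R]_(n + m, n + m) :=
  (block_mx Up 0 (Z *m Up) UH)^T.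
Definition preD3 (Dp : 'M[R]_n) (DH : 'M[R]_m) : 'M[R]_(n + m) := dsum Dp DH.

End Filters.
End Defs.

(* Every MWGS call is an exact factorization: A^T = Rm W^T and W^T D_A W = D_R give
   Rm D_R Rm^T = A^T D_A A.  For step (ii) the right-hand side is
   Tbar P_{k-1|k-1} Tbar^T + Qbar = P_{k|k-1}.  For step (iii) it is the block matrix
   [[P, P Z^T], [Z P, Z P Z^T + H]] with P = P_{k|k-1}; comparing blocks with the
   block upper triangular post-array gives U_Re D_Re U_Re^T = R_e and
   Kbar D_Re U_Re^T = P Z^T, hence Kbar U_Re^-1 = K, while the upper left block is the
   Schur complement P - K R_e K^T = (I - K Z) P = P_{k|k}.
   Since D_A > 0, P_{k|k-1} = A^T D_A A is positive semidefinite. *)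
From HB Require Import structures.
From mathcomp Require Import all_boot all_order all_algebra.
From mathcomp Require Import lra.
Import Order.TTheory GRing.Theory Num.Theory.
Set Implicit Arguments. Unset Strict Implicit. Unset Printing Implicit Defensive.
Local Open Scope ring_scope.

Section UDUFactors.
Variable R : realFieldType.

Lemma unit_upper_unitmx k (U : 'M[R]_k) : unit_upper U -> U \in unitmx.
Proof.
move=> [Ulow Udiag]; rewrite unitmxE -det_tr det_trig.
  by rewrite big1 ?unitr1 // => i _; rewrite mxE Udiag.
by apply/is_trig_mxP => i j ij; rewrite mxE Ulow.
Qed.

Lemma unit_upper_block p q (U : 'M[R]_(p + q)) :
  unit_upper U -> U = block_mx (ulsubmx U) (ursubmx U) 0 (drsubmx U).
Proof.
move=> [Ulow _]; rewrite -[LHS]submxK; congr block_mx.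
apply/matrixP => i j; rewrite !mxE Ulow //=.
by rewrite (leq_trans (ltn_ord j)) // leq_addr.
Qed.

Lemma unit_upper_drsubmx p q (U : 'M[R]_(p + q)) :
  unit_upper U -> unit_upper (drsubmx U).
Proof.
move=> [Ulow Udiag]; split=> [i j ij|i]; rewrite !mxE ?Udiag //.
by apply: Ulow; rewrite /= ltn_add2l.
Qed.

Lemma is_diag_block p q (D : 'M[R]_(p + q)) :
  is_diag D -> D = block_mx (ulsubmx D) 0 0 (drsubmx D).
Proof.
move=> Ddiag; rewrite -[LHS]submxK; congr block_mx;
  apply/matrixP => i j; rewrite !mxE Ddiag //; apply/eqP => /(congr1 val) /= Eij.
- by move: (ltn_ord i); rewrite Eij ltnNge leq_addr.
- by move: (ltn_ord j); rewrite -Eij ltnNge leq_addr.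
Qed.

Lemma diag_quad_ge0 k (D : 'M[R]_k) (w : 'cV[R]_k) :
  is_diag D -> (forall i, 0 <= D i i) -> 0 <= (w^T *m D *m w) ord0 ord0.
Proof.
move=> Ddiag Dge0; rewrite mxE; apply: sumr_ge0 => j _; rewrite mxE.
rewrite (bigD1 j) //= big1 ?addr0 => [|i ij]; last by rewrite Ddiag ?mulr0.
rewrite mxE [_ * D j j]mulrC -mulrA; apply: mulr_ge0 => //.
by rewrite -expr2 sqr_ge0.
Qed.

Lemma quad_gt0_unitmx k (M : 'M[R]_k) :
  (forall v : 'cV_k, v != 0 -> 0 < (v^T *m M *m v) ord0 ord0) -> M \in unitmx.
Proof.
move=> Mpos; rewrite unitmxE unitfE; apply/negP => /det0P [v v_neq0 vM].
have vT_neq0 : v^T != 0.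
  by apply: contra v_neq0 => /eqP vT0; rewrite -[v]trmxK vT0 trmx0.
by have := Mpos _ vT_neq0; rewrite trmxK vM mul0mx mxE ltxx.
Qed.

Section MWGS.
Variables (r s : nat) (A : 'M[R]_(r, s)) (DA : 'M[R]_r) (Rm DR : 'M[R]_s).
Hypothesis mwgs : MWGS A DA Rm DR.

Lemma MWGS_UDU : Rm *m DR *m Rm^T = A^T *m DA *m A.
Proof.
have [_ [_ [_ [_ [W [EA EDR]]]]]] := mwgs.
have -> : A = W *m Rm^T by rewrite -[A]trmxK EA trmx_mul trmxK.
by rewrite -EDR trmx_mul trmxK !mulmxA.
Qed.

Lemma MWGS_UDU_psd (w : 'cV[R]_s) :
  0 <= (w^T *m (Rm *m DR *m Rm^T) *m w) ord0 ord0.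
Proof.
have [DAdiag [DApos _]] := mwgs.
rewrite MWGS_UDU -!mulmxA !mulmxA -trmx_mul -mulmxA.
by apply: diag_quad_ge0 => // i; apply/ltW.
Qed.

End MWGS.
End UDUFactors.

Section FilterSteps.
Variables (R : realFieldType) (n m : nat).
Variables (T Q : 'M[R]_n) (Z : 'M[R]_(m, n)) (S : 'M[R]_(n, m)) (H UH DH : 'M[R]_m).
Hypotheses (HH : posdef H) (fH : UDU_fact H UH DH).

Lemma time_update (UQb DQb Pf Uf Df Up Dp : 'M[R]_n) :
  UDU_fact (Qbar Q S H) UQb DQb -> Uf *m Df *m Uf^T = Pf ->
  MWGS (row_mx (Tbar T S H Z *m Uf) UQb)^T (dsum Df DQb) Up Dp ->
  Up *m Dp *m Up^T = pred_cov T Z Q S H Pf.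
Proof.
move=> [_ [_ EQb]] <- /MWGS_UDU ->.
rewrite trmxK /dsum tr_row_mx mul_row_block !mulmx0 addr0 add0r mul_row_col.
by rewrite /pred_cov EQb !trmx_mul !mulmxA.
Qed.

Lemma innov_cov_unitmx (Pp : 'M[R]_n) :
  (forall w : 'cV[R]_n, 0 <= (w^T *m Pp *m w) ord0 ord0) ->
  innov_cov Z H Pp \in unitmx.
Proof.
move=> Pp_psd; apply: quad_gt0_unitmx => v v_neq0.
rewrite /innov_cov mulmxDr mulmxDl mxE.
have := HH.2 v v_neq0; have := Pp_psd (Z^T *m v).
rewrite trmx_mul trmxK !mulmxA; lra.
Qed.

Section MeasurementUpdate.
Variables (Pp Up Dp : 'M[R]_n) (R3 DR3 : 'M[R]_(n + m)).
Hypotheses (EPp : Up *m Dp *m Up^T = Pp)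
  (Pp_psd : forall w : 'cV[R]_n, 0 <= (w^T *m Pp *m w) ord0 ord0)
  (mwgs3 : MWGS (preA3 Z Up UH) (preD3 Dp DH) R3 DR3).

Local Notation Uf := (ulsubmx R3).
Local Notation Kb := (ursubmx R3).
Local Notation URe := (drsubmx R3).
Local Notation Df := (ulsubmx DR3).
Local Notation DRe := (drsubmx DR3).

Lemma measurement_update_blocks :
  [/\ Uf *m Df *m Uf^T + Kb *m DRe *m Kb^T = Pp,
      Kb *m DRe *m URe^T = Pp *m Z^T,
      URe *m DRe *m Kb^T = Z *m Pp
    & URe *m DRe *m URe^T = innov_cov Z H Pp].
Proof.
have [_ [_ [R3uu [DR3diag _]]]] := mwgs3.
have E := MWGS_UDU mwgs3.
rewrite (unit_upper_block R3uu) (is_diag_block DR3diag) in E.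
rewrite /preA3 /preD3 /dsum trmxK !tr_block_mx !mulmx_block in E.
rewrite !(mulmx0, mul0mx, addr0, add0r, trmx0) in E.
have [_ [_ EH]] := fH.
move/eq_block_mx: E => [E11 E12 E21 E22].
rewrite /innov_cov -EPp EH; split.
- exact: E11.
- by rewrite E12 trmx_mul !mulmxA.
- by rewrite E21 !mulmxA.
- by rewrite E22 trmx_mul !mulmxA.
Qed.

Lemma measurement_update :
  [/\ URe *m DRe *m URe^T = innov_cov Z H Pp,
      Kb *m invmx URe = gain Z H Pp
    & Uf *m Df *m Uf^T = (1%:M - gain Z H Pp *m Z) *m Pp].
Proof.
have [EPf EKRe EReK ERe] := measurement_update_blocks.
have [_ [_ [R3uu _]]] := mwgs3.
have URe_unit : URe \in unitmx by apply/unit_upper_unitmx/unit_upper_drsubmx.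
have Re_unit := innov_cov_unitmx Pp_psd.
have EK : Kb *m invmx URe = gain Z H Pp.
  have EKRe' : Kb *m invmx URe *m innov_cov Z H Pp = Pp *m Z^T.
    by rewrite -ERe !mulmxA mulmxKV.
  by rewrite /gain -EKRe' mulmxK.
have EKZPp : gain Z H Pp *m Z *m Pp = Kb *m DRe *m Kb^T.
  by rewrite -EK -mulmxA -EReK !mulmxA mulmxKV.
split => //.
by rewrite mulmxBl mul1mx EKZPp -EPf addrK.
Qed.

End MeasurementUpdate.
End FilterSteps.

Section Equivalence.
Variables (R : realFieldType) (n m d N : nat).
Variables (T : 'M[R]_n) (B : 'M[R]_(n, d)) (Z : 'M[R]_(m, n)) (beta : 'M[R]_(m, d))
  (Q : 'M[R]_n) (S : 'M[R]_(n, m)) (H : 'M[R]_m)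
  (abar0 : 'cV[R]_n) (Pi0 : 'M[R]_n) (x : nat -> 'cV[R]_d) (y : nat -> 'cV[R]_m).
Variables (UPi0 DPi0 : 'M[R]_n) (UH DH : 'M[R]_m) (UQb DQb : 'M[R]_n)
  (Up Dp : nat -> 'M[R]_n) (R3 DR3 : nat -> 'M[R]_(n + m)).
Hypotheses (HH : posdef H) (fPi0 : UDU_fact Pi0 UPi0 DPi0) (fH : UDU_fact H UH DH)
  (fQb : UDU_fact (Qbar Q S H) UQb DQb)
  (step2 : forall k, (1 <= k <= N)%N ->
     MWGS (preA2 T Z S H R3 UPi0 UQb k) (preD2 DR3 DPi0 DQb k) (Up k) (Dp k))
  (step3 : forall k, (1 <= k <= N)%N ->
     MWGS (preA3 Z (Up k) UH) (preD3 (Dp k) DH) (R3 k) (DR3 k)).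

Local Notation Pfilt := (kf_filt_cov T B Z beta Q S H x y abar0 Pi0).
Local Notation Ppred := (kf_pred_cov T B Z beta Q S H x y abar0 Pi0).
Local Notation Re := (kf_Re T B Z beta Q S H x y abar0 Pi0).
Local Notation K := (kf_K T B Z beta Q S H x y abar0 Pi0).
Local Notation afilt := (kf_filt_est T B Z beta Q S H x y abar0 Pi0).
Local Notation ud_afilt := (ud_filt_est T B Z beta S H x y R3 abar0).
Local Notation Ufilt := (ud_Ufilt R3 UPi0).
Local Notation Dfilt := (ud_Dfilt DR3 DPi0).

Lemma ud_step_agree j : (j < N)%N ->
  Ufilt j *m Dfilt j *m (Ufilt j)^T = Pfilt j ->
  [/\ Up j.+1 *m Dp j.+1 *m (Up j.+1)^T = Ppred j.+1,
      ud_URe R3 j.+1 *m ud_DRe DR3 j.+1 *m (ud_URe R3 j.+1)^T = Re j.+1,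
      ud_Kbar R3 j.+1 *m invmx (ud_URe R3 j.+1) = K j.+1
    & Ufilt j.+1 *m Dfilt j.+1 *m (Ufilt j.+1)^T = Pfilt j.+1].
Proof.
move=> ltjN EPf; have leSjN : (1 <= j.+1 <= N)%N by apply/andP.
have EPp : Up j.+1 *m Dp j.+1 *m (Up j.+1)^T = Ppred j.+1.
  exact: time_update fQb EPf (step2 leSjN).
have Pp_psd (w : 'cV[R]_n) : 0 <= (w^T *m Ppred j.+1 *m w) ord0 ord0.
  by rewrite -EPp; exact: MWGS_UDU_psd (step2 leSjN) w.
by have [] := measurement_update HH fH EPp Pp_psd (step3 leSjN).
Qed.

Lemma ud_filt_agree j : (j <= N)%N ->
  Ufilt j *m Dfilt j *m (Ufilt j)^T = Pfilt j /\ ud_afilt j = afilt j.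
Proof.
elim: j => [_|j IH ltjN].
  by have [_ [_ EPi0]] := fPi0; rewrite /= EPi0.
have [EPf Ea] := IH (ltnW ltjN).
have [_ _ EK EPf'] := ud_step_agree ltjN EPf.
split; first exact: EPf'.
by rewrite /= Ea EK.
Qed.

End Equivalence.

Theorem proposition1 (R : realFieldType) (n m d N : nat)
  (T : 'M[R]_n) (B : 'M[R]_(n, d)) (Z : 'M[R]_(m, n)) (beta : 'M[R]_(m, d))
  (Q : 'M[R]_n) (S : 'M[R]_(n, m)) (H : 'M[R]_m)
  (abar0 : 'cV[R]_n) (Pi0 : 'M[R]_n)
  (x : nat -> 'cV[R]_d) (y : nat -> 'cV[R]_m)
  (* model assumptions *)
  (HQS : possemidef (block_mx Q S S^T H))
  (HH : posdef H) (HPi0 : posdef Pi0) (HQb : possemidef (Qbar Q S H))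
  (* UDU^T factorizations used by Algorithm 1a *)
  (UPi0 DPi0 : 'M[R]_n) (UH DH : 'M[R]_m) (UQb DQb : 'M[R]_n)
  (fPi0 : UDU_fact Pi0 UPi0 DPi0) (fH : UDU_fact H UH DH)
  (fQb : UDU_fact (Qbar Q S H) UQb DQb)
  (* MWGS outputs of steps (ii) and (iii) of Algorithm 1a *)
  (Up Dp : nat -> 'M[R]_n) (R3 DR3 : nat -> 'M[R]_(n + m))
  (step2 : forall k, (1 <= k <= N)%N ->
     MWGS (preA2 T Z S H R3 UPi0 UQb k) (preD2 DR3 DPi0 DQb k) (Up k) (Dp k))
  (step3 : forall k, (1 <= k <= N)%N ->
     MWGS (preA3 Z (Up k) UH) (preD3 (Dp k) DH) (R3 k) (DR3 k)) :
  forall k, (1 <= k <= N)%N ->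
    [/\ Up k *m Dp k *m (Up k)^T = kf_pred_cov T B Z beta Q S H x y abar0 Pi0 k,
        ud_URe R3 k *m ud_DRe DR3 k *m (ud_URe R3 k)^T
          = kf_Re T B Z beta Q S H x y abar0 Pi0 k,
        ud_Kbar R3 k *m invmx (ud_URe R3 k) = kf_K T B Z beta Q S H x y abar0 Pi0 k,
        ud_Ufilt R3 UPi0 k *m ud_Dfilt DR3 DPi0 k *m (ud_Ufilt R3 UPi0 k)^T
          = kf_filt_cov T B Z beta Q S H x y abar0 Pi0 k
      & ud_pred_est T B Z beta S H x y R3 abar0 k
          = kf_pred_est T B Z beta Q S H x y abar0 Pi0 k /\
        ud_filt_est T B Z beta S H x y R3 abar0 k
          = kf_filt_est T B Z beta Q S H x y abar0 Pi0 k].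
Proof.
have agree := ud_filt_agree B beta abar0 x y HH fPi0 fH fQb step2 step3.
case=> [//|j] /andP[_ ltjN].
have [EPf Ea] := agree j (ltnW ltjN).
have [EPp ERe EK EPf'] := ud_step_agree HH fH fQb step2 step3 ltjN EPf.
split; [exact: EPp | exact: ERe | exact: EK | exact: EPf' | split].
- by rewrite /ud_pred_est /kf_pred_est /= Ea.
- by have [] := agree j.+1 ltjN.
Qed.
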